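(* Let $\mathfrak{R}$ be an optimal reconciliation. Then there exists a minimal reconciliation $\mathfrak{R}'$ such that $\mathfrak{R}$ is a completion of $\mathfrak{R}'$.
   Context: All trees are rooted binary trees whose root node has degree 1; every other non-leaf node $x$ has exactly two children $x_l,x_r$. $G$ is a gene tree, $S$ a species tree, $\phi:L(G)\to L(S)$, with the standing assumption that the last common ancestor in $S$ of $\phi(L(G))$ is the unique child of $root(S)$. A tree $G'$ is an extension of $G$ if $G$ is obtained from $G'$ by pruning some subtrees and suppressing degree-2 nodes; $V(G)\subseteq V(G')$. A map $\rho:V(G')\to V(S)$ is consistent with $S$ (equivalently $G'$ is $\rho$-consistent) if $\rho(root(G'))=root(S)$ and every node $x$ of $G'$ with two children satisfies (D) $\rho(x)=\rho(x_l)=\rho(x_r)$ or (S) $\rho(x)_l=\rho(x_l)$ and $\rho(x)_r=\rho(x_r)$. A reconciliation $(G,G',S,\phi,\rho,\delta)$ consists of an extension $G'$ of $G$, a consistent $\rho$ with $\rho|_{L(G)}=\phi$, and an injective partial function $\delta:\Delta\to\Lambda$ with $\rho(x)=\rho(\delta(x))$, where $\Delta$ is the set of nodes with two children satisfying (D) and $\Lambda=L(G')\setminus L(G)$; $\Delta'$ = domain, $\Lambda'$ = image of $\delta$. Cost $\omega=|\Lambda\setminus\Lambda'|+|\Delta\setminus\Delta'|+|\Delta'|$; optimal = minimum cost among all reconciliations for the given $G,S,\phi$. A lost subtree is a maximal subtree $T$ of $G'$ with $V(T)\cap V(G)=\emptyset$. $\mathfrak{R}'=(G,G'',S,\phi,\rho',\delta')$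 is obtained from $\mathfrak{R}=(G,G',S,\phi,\rho,\delta)$ by loss extension if $G''$ is an extension of $G'$, $\rho'|_{V(G')}=\rho$, and they have the same number of lost subtrees; a completion of $\mathfrak{R}$ is a reconciliation of minimum cost among those obtained from $\mathfrak{R}$ by loss extension. A reconciliation $(G,G',S,\phi,\rho,\delta)$ is minimal if there is no $G''$ such that $G'$ is a proper extension of $G''$, $G''$ is an extension of $G$, and $G''$ is consistent with respect to $\rho|_{V(G'')}$. *)

From mathcomp Require Import all_boot.
Set Implicit Arguments. Unset Strict Implicit. Unset Printing Implicit Defensive.

(** A [btree] is a full binary
    tree (every internal node has an ordered pair of children x_l, x_r);
    an [rtree] is a rooted tree whose root has exactly one child. *)
Inductive btree : Type :=
| BLeaf (v : nat)
| BNode (v : nat) (l r : btree).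

Record rtree : Type := RTree { rroot : nat; rchild : btree }.

Definition blabel (t : btree) : nat :=
  match t with BLeaf v => v | BNode v _ _ => v end.

Fixpoint bnodes (t : btree) : seq nat :=
  match t with BLeaf v => [:: v] | BNode v l r => v :: bnodes l ++ bnodes r end.

Fixpoint bleaves (t : btree) : seq nat :=
  match t with BLeaf v => [:: v] | BNode _ l r => bleaves l ++ bleaves r end.

Fixpoint binternal (t : btree) : seq (nat * nat * nat) :=
  match t with
  | BLeaf _ => [::]
  | BNode v l r => (v, blabel l, blabel r) :: binternal l ++ binternal r
  end.

Definition rnodes (T : rtree) : seq nat := rroot T :: bnodes (rchild T).
Definition rleaves (T : rtree) : seq nat := bleaves (rchild T).
Definition rinternal (T : rtree) : seq (nat * nat * nat) := binternal (rchild T).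

Definition wf (T : rtree) : Prop := uniq (rnodes T).

Fixpoint bsub (t : btree) (s : nat) : option btree :=
  match t with
  | BLeaf v => if v == s then Some t else None
  | BNode v l r =>
      if v == s then Some t
      else match bsub l s with Some u => Some u | None => bsub r s end
  end.

Definition desc (T : rtree) (s : nat) : seq nat :=
  if rroot T == s then rnodes T
  else match bsub (rchild T) s with Some u => bnodes u | None => [::] end.

Definition is_lca (T : rtree) (A : seq nat) (s : nat) : Prop :=
  s \in rnodes T /\ {subset A <= desc T s} /\
  forall s', s' \in rnodes T -> {subset A <= desc T s'} -> s \in desc T s'.

(** * Standing setting: G gene tree, S species tree, phi : L(G) -> L(S),
    lca_S(phi(L(G))) is the unique child of root(S). *)
Definition setting (G S : rtree) (phi : nat -> nat) : Prop :=
  [/\ wf G, wf S,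
      (forall x, x \in rleaves G -> phi x \in rleaves S)
    & is_lca S (map phi (rleaves G)) (blabel (rchild S))].

(** * Extensions: G is obtained from G' by pruning subtrees and suppressing
    the resulting degree-2 nodes. [bext t' t] : t is obtained from t'. *)
Inductive bext : btree -> btree -> Prop :=
| bext_leaf v : bext (BLeaf v) (BLeaf v)
| bext_node v l' r' l r : bext l' l -> bext r' r -> bext (BNode v l' r') (BNode v l r)
| bext_pruneR v l' r' t : bext l' t -> bext (BNode v l' r') t
| bext_pruneL v l' r' t : bext r' t -> bext (BNode v l' r') t.

Definition extension (G' G : rtree) : Prop :=
  [/\ wf G', rroot G' = rroot G & bext (rchild G') (rchild G)].

Definition consistent (S : rtree) (rho : nat -> nat) (G' : rtree) : Prop :=
  rho (rroot G') = rroot S /\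
  forall x xl xr, (x, xl, xr) \in rinternal G' ->
     (rho x = rho xl /\ rho x = rho xr) \/
     (exists sl sr, (rho x, sl, sr) \in rinternal S /\ rho xl = sl /\ rho xr = sr).

Definition Delta (G' : rtree) (rho : nat -> nat) : seq nat :=
  [seq t.1.1 | t <- rinternal G' & (rho t.1.1 == rho t.1.2) && (rho t.1.1 == rho t.2)].

Definition Lambda (G G' : rtree) : seq nat :=
  [seq y <- rleaves G' | y \notin rleaves G].

(** delta : injective partial function Delta -> Lambda, given as an option-valued
    function (its values outside Delta are irrelevant). *)
Definition Delta' (G' : rtree) (rho : nat -> nat) (delta : nat -> option nat) : seq nat :=
  [seq x <- Delta G' rho | delta x != None].

Definition Lambda' (G G' : rtree) (rho : nat -> nat) (delta : nat -> option nat) : seq nat :=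
  [seq y <- Lambda G G' | has (fun x => delta x == Some y) (Delta' G' rho delta)].

Definition reconciliation (G G' S : rtree) (phi rho : nat -> nat)
    (delta : nat -> option nat) : Prop :=
  [/\ extension G' G,
      (forall x, x \in rnodes G' -> rho x \in rnodes S),
      consistent S rho G',
      (forall x, x \in rleaves G -> rho x = phi x)
    &
      (forall x y, x \in Delta G' rho -> delta x = Some y ->
                   y \in Lambda G G' /\ rho x = rho y) /\
      (forall x1 x2, x1 \in Delta G' rho -> x2 \in Delta G' rho ->
                     delta x1 != None -> delta x1 = delta x2 -> x1 = x2)].

Definition cost (G G' : rtree) (rho : nat -> nat) (delta : nat -> option nat) : nat :=
  size [seq y <- Lambda G G' | y \notin Lambda' G G' rho delta]
  + size [seq x <- Delta G' rho | x \notin Delta' G' rho delta]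
  + size (Delta' G' rho delta).

Definition optimal (G G' S : rtree) (phi rho : nat -> nat)
    (delta : nat -> option nat) : Prop :=
  reconciliation G G' S phi rho delta /\
  forall G2 rho2 delta2, reconciliation G G2 S phi rho2 delta2 ->
    cost G G' rho delta <= cost G G2 rho2 delta2.

(** * Lost subtrees: maximal (rooted) subtrees of G' containing no node of G.
    [count_lost VG t] counts them inside t. *)
Fixpoint count_lost (VG : seq nat) (t : btree) : nat :=
  if all (fun v => v \notin VG) (bnodes t) then 1
  else match t with
       | BLeaf _ => 0
       | BNode _ l r => count_lost VG l + count_lost VG r
       end.

(** the root of G' belongs to V(G) for any extension G' of G, so lost
    subtrees lie below the unique child of root(G') *)
Definition n_lost (G G' : rtree) : nat := count_lost (rnodes G) (rchild G').

Definition loss_extension (G S : rtree) (phi : nat -> nat)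
    (G1 : rtree) (rho1 : nat -> nat) (delta1 : nat -> option nat)
    (G2 : rtree) (rho2 : nat -> nat) (delta2 : nat -> option nat) : Prop :=
  [/\ reconciliation G G1 S phi rho1 delta1,
      reconciliation G G2 S phi rho2 delta2,
      extension G2 G1,
      (forall x, x \in rnodes G1 -> rho2 x = rho1 x)
    & n_lost G G2 = n_lost G G1].

Definition completion (G S : rtree) (phi : nat -> nat)
    (G1 : rtree) (rho1 : nat -> nat) (delta1 : nat -> option nat)
    (G2 : rtree) (rho2 : nat -> nat) (delta2 : nat -> option nat) : Prop :=
  loss_extension G S phi G1 rho1 delta1 G2 rho2 delta2 /\
  forall G3 rho3 delta3,
    loss_extension G S phi G1 rho1 delta1 G3 rho3 delta3 ->
    cost G G2 rho2 delta2 <= cost G G3 rho3 delta3.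

Definition minimal (G G' S : rtree) (phi rho : nat -> nat)
    (delta : nat -> option nat) : Prop :=
  reconciliation G G' S phi rho delta /\
  ~ exists G'', [/\ extension G' G'', G' <> G'', extension G'' G & consistent S rho G''].

(** An optimal reconciliation is already minimal, hence a completion of itself.
    Suppose [rho] were consistent on a proper pruning [G''] of [G'] that still extends
    [G]. Comparing [G'] with [G''] from the root down exposes one of three local
    configurations in [G']: a duplication with a child subtree containing no node of [G];
    the root speciating into such a subtree; or a duplication whose two copies both
    speciate and lose complementary children. In each case deleting the superfluous
    nodes, and regrafting onto the partner loss of the deleted duplication when that loss
    survives, gives a reconciliation with the same [rho] and the restricted [delta] that
    is strictly cheaper, contradicting optimality. *)

From mathcomp Require Import all_boot zify.
Set Implicit Arguments. Unset Strict Implicit. Unset Printing Implicit Defensive.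

Implicit Types (s t u : btree) (v w x y : nat).

(** * Subtrees and extensions *)

Inductive subtree (s : btree) : btree -> Prop :=
| subtree_refl : subtree s s
| subtree_l v l r : subtree s l -> subtree s (BNode v l r)
| subtree_r v l r : subtree s r -> subtree s (BNode v l r).

Lemma subtree_trans a b c : subtree a b -> subtree b c -> subtree a c.
Proof. by move=> Hab; elim=> // v l r _ IH; [apply: subtree_l | apply: subtree_r]. Qed.

Lemma subtree_nodeL v l r t : subtree (BNode v l r) t -> subtree l t.
Proof. by apply: subtree_trans; apply/subtree_l/subtree_refl. Qed.

Lemma subtree_nodeR v l r t : subtree (BNode v l r) t -> subtree r t.
Proof. by apply: subtree_trans; apply/subtree_r/subtree_refl. Qed.

Lemma subtree_leaf_inv s v : subtree s (BLeaf v) -> s = BLeaf v.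
Proof. by move=> H; inversion H. Qed.

Lemma subtree_node_inv s v l r : subtree s (BNode v l r) ->
  [\/ s = BNode v l r, subtree s l | subtree s r].
Proof. by move=> H; inversion H; subst; [apply: Or31 | apply: Or32 | apply: Or33]. Qed.

Lemma blabel_in t : blabel t \in bnodes t.
Proof. by case: t => [v|v l r] /=; rewrite inE eqxx. Qed.

Lemma bleaves_sub t : {subset bleaves t <= bnodes t}.
Proof.
elim: t => [w|v l IHl r IHr] x //=; rewrite inE !mem_cat.
by case/orP=> [/IHl|/IHr] ->; rewrite ?orbT.
Qed.

Lemma bleaves_exists t : exists l, l \in bleaves t.
Proof.
elim: t => [w|w l [x Hx] r _]; first by exists w; rewrite inE.
by exists x; rewrite /= mem_cat Hx.
Qed.

Lemma subtree_nodes s t : subtree s t -> {subset bnodes s <= bnodes t}.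
Proof. by elim=> //= v l r _ IH x /IH Hx; rewrite inE mem_cat Hx ?orbT. Qed.

Lemma subtree_leaves s t : subtree s t -> {subset bleaves s <= bleaves t}.
Proof. by elim=> //= v l r _ IH x /IH Hx; rewrite mem_cat Hx ?orbT. Qed.

Lemma subtree_internal s t : subtree s t -> {subset binternal s <= binternal t}.
Proof. by elim=> //= v l r _ IH x /IH Hx; rewrite inE mem_cat Hx ?orbT. Qed.

Lemma subtree_internal_head v l r t : subtree (BNode v l r) t ->
  (v, blabel l, blabel r) \in binternal t.
Proof. by move/subtree_internal; apply; rewrite inE eqxx. Qed.

Lemma internal_subtree t v a b : (v, a, b) \in binternal t ->
  exists l r, [/\ subtree (BNode v l r) t, blabel l = a & blabel r = b].
Proof.
elim: t => [//|w l IHl r IHr] /=; rewrite inE mem_cat.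
case/orP=> [/eqP[-> -> ->]|/orP[/IHl|/IHr] [l' [r' [H <- <-]]]].
- by exists l, r; split=> //; apply: subtree_refl.
- by exists l', r'; split=> //; apply: subtree_l.
- by exists l', r'; split=> //; apply: subtree_r.
Qed.

Lemma node_subtree t x : x \in bnodes t -> exists2 u, subtree u t & blabel u = x.
Proof.
elim: t => [w|w l IHl r IHr] /=; rewrite ?inE ?mem_cat.
  by move/eqP->; exists (BLeaf w); first apply: subtree_refl.
case/orP=> [/eqP->|/orP[/IHl|/IHr] [u Hu <-]]; last by exists u; first apply: subtree_r.
  by exists (BNode w l r); first apply: subtree_refl.
by exists u; first apply: subtree_l.
Qed.

Lemma leaf_subtree t x : (x \in bleaves t) <-> subtree (BLeaf x) t.
Proof.
split; last by move/subtree_leaves; apply; rewrite inE.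
elim: t => [w|w l IHl r IHr] /=; first by rewrite inE => /eqP->; apply: subtree_refl.
by rewrite mem_cat => /orP[/IHl/subtree_l|/IHr/subtree_r].
Qed.

Lemma internal_head_in t tr : tr \in binternal t -> tr.1.1 \in bnodes t.
Proof.
case: tr => [[v a] b] /internal_subtree [l [r [H _ _]]].
by apply: (subtree_nodes H); rewrite inE eqxx.
Qed.

Lemma subtree_uniq s t : subtree s t -> uniq (bnodes t) -> uniq (bnodes s).
Proof. by elim=> //= v l r _ IH /andP[_]; rewrite cat_uniq => /and3P[? _ ?]; apply: IH. Qed.

Lemma uniq_node v l r : uniq (bnodes (BNode v l r)) ->
  [/\ v \notin bnodes l, v \notin bnodes r &
      forall w, w \in bnodes l -> w \in bnodes r -> False].
Proof.
rewrite /= mem_cat negb_or cat_uniq => /andP[/andP[-> ->] /and3P[_ D _]].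
by split=> // w Hl Hr; case/hasP: D; exists w.
Qed.

Lemma bleaves_uniq t : uniq (bnodes t) -> uniq (bleaves t).
Proof.
elim: t => [//|v l IHl r IHr] U; have [_ _ D] := uniq_node U.
move: U => /= /andP[_]; rewrite !cat_uniq => /and3P[Ul _ Ur].
rewrite IHl // IHr //= andbT; apply/hasPn => x /bleaves_sub Hr.
by apply/negP => /bleaves_sub Hl; apply: (D x).
Qed.

Lemma subtree_label_inj t t1 t2 : uniq (bnodes t) ->
  subtree t1 t -> subtree t2 t -> blabel t1 = blabel t2 -> t1 = t2.
Proof.
elim: t t1 t2 => [w|w l IHl r IHr] t1 t2 U.
  by move=> /subtree_leaf_inv -> /subtree_leaf_inv ->.
have [Nl Nr D] := uniq_node U.
have [Ul Ur] : uniq (bnodes l) /\ uniq (bnodes r).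
  by move: U => /= /andP[_]; rewrite cat_uniq => /and3P[].
have inL s : subtree s l -> blabel s \in bnodes l by move/subtree_nodes; apply; apply: blabel_in.
have inR s : subtree s r -> blabel s \in bnodes r by move/subtree_nodes; apply; apply: blabel_in.
case/subtree_node_inv=> [->|H1|H1]; case/subtree_node_inv=> [->|H2|H2] //= E.
- by move: (inL _ H2); rewrite -E (negbTE Nl).
- by move: (inR _ H2); rewrite -E (negbTE Nr).
- by move: (inL _ H1); rewrite E (negbTE Nl).
- exact: IHl.
- by case: (D (blabel t1) (inL _ H1)); rewrite E inR.
- by move: (inR _ H1); rewrite E (negbTE Nr).
- by case: (D (blabel t2) (inL _ H2)); rewrite -E inR.
- exact: IHr.
Qed.

Lemma internal_label_inj t v a b a' b' : uniq (bnodes t) ->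
  (v, a, b) \in binternal t -> (v, a', b') \in binternal t -> a = a' /\ b = b'.
Proof.
move=> U /internal_subtree [l [r [H1 <- <-]]] /internal_subtree [l' [r' [H2 <- <-]]].
by case: (subtree_label_inj U H1 H2 erefl) => -> ->.
Qed.

Lemma internal_labels_distinct t v a b : uniq (bnodes t) ->
  (v, a, b) \in binternal t -> [/\ v <> a, v <> b & a <> b].
Proof.
move=> U /internal_subtree [l [r [H <- <-]]].
have [Nl Nr D] := uniq_node (subtree_uniq H U).
split=> E; first by move: Nl; rewrite E blabel_in.
  by move: Nr; rewrite E blabel_in.
by apply: (D (blabel l)); [apply: blabel_in | rewrite E blabel_in].
Qed.

Lemma bext_refl t : bext t t.
Proof. by elim: t => *; constructor. Qed.

Lemma bext_nodes t g : bext t g -> {subset bnodes g <= bnodes t}.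
Proof.
elim=> [v|v l' r' l r _ IHl _ IHr|v l' r' g' _ IH|v l' r' g' _ IH] x //=;
  rewrite !inE !mem_cat.
- by case/orP=> [->|/orP[/IHl|/IHr] ->]; rewrite ?orbT.
- by move/IH->; rewrite orbT.
- by move/IH->; rewrite !orbT.
Qed.

Lemma bext_leaf_inv v g : bext (BLeaf v) g -> g = BLeaf v.
Proof. by move=> H; inversion H. Qed.

Lemma bext_node_inv x a b g : bext (BNode x a b) g ->
  [\/ exists l r, [/\ g = BNode x l r, bext a l & bext b r], bext a g | bext b g].
Proof. by move=> H; inversion H; subst; [apply: Or31; exists l, r | apply: Or32 | apply: Or33]. Qed.

(** * Grafting *)

Fixpoint graft t a u : btree :=
  if blabel t == a then u else
  match t with BLeaf _ => t | BNode v l r => BNode v (graft l a u) (graft r a u) end.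

Lemma graft_notin t a u : a \notin bnodes t -> graft t a u = t.
Proof.
elim: t => [w|w l IHl r IHr] /=; first by rewrite inE eq_sym => /negbTE->.
by rewrite inE mem_cat eq_sym => /norP[/negbTE-> /norP[/IHl-> /IHr->]].
Qed.

Lemma graft_subtree_self s t u : subtree s t -> subtree u (graft t (blabel s) u).
Proof.
elim=> [|v l r _ IH|v l r _ IH] /=.
  by case: s => [?|???] /=; rewrite eqxx; apply: subtree_refl.
all: by case: (v == blabel s); [apply: subtree_refl | constructor].
Qed.

Lemma graft_perm (f : btree -> seq nat) (h : nat -> seq nat) :
    (forall v l r, f (BNode v l r) = h v ++ f l ++ f r) ->
  forall s t u, uniq (bnodes t) -> subtree s t ->
  perm_eq (f (graft t (blabel s) u) ++ f s) (f t ++ f u).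
Proof.
move=> fE s t u; elim: t => [w|w l IHl r IHr] U.
  by move/subtree_leaf_inv->; rewrite /= eqxx perm_catC.
have [Nl Nr D] := uniq_node U.
have [Ul Ur] : uniq (bnodes l) /\ uniq (bnodes r).
  by move: U => /= /andP[_]; rewrite cat_uniq => /and3P[].
have Ns t' : subtree s t' -> w \notin bnodes t' -> w != blabel s.
  by move=> /subtree_nodes Hs; apply: contra => /eqP->; apply/Hs/blabel_in.
case/subtree_node_inv=> [->|Hl|Hr]; first by rewrite /= eqxx perm_catC.
- have Sr : blabel s \notin bnodes r.
    by apply/negP => Hr; apply: (D (blabel s)) => //; apply: (subtree_nodes Hl); apply: blabel_in.
  move/permP: (IHl Ul Hl) => IH.
  rewrite /= (negbTE (Ns _ Hl Nl)) (graft_notin _ Sr); apply/permP => P.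
  by move: (IH P); rewrite !fE !count_cat; lia.
- have Sl : blabel s \notin bnodes l.
    by apply/negP => Hl; apply: (D (blabel s)) => //; apply: (subtree_nodes Hr); apply: blabel_in.
  move/permP: (IHr Ur Hr) => IH.
  rewrite /= (negbTE (Ns _ Hr Nr)) (graft_notin _ Sl); apply/permP => P.
  by move: (IH P); rewrite !fE !count_cat; lia.
Qed.

Lemma graft_nodes s t u : uniq (bnodes t) -> subtree s t ->
  perm_eq (bnodes (graft t (blabel s) u) ++ bnodes s) (bnodes t ++ bnodes u).
Proof. exact: (@graft_perm bnodes (fun v => [:: v])). Qed.

Lemma graft_leaves s t u : uniq (bnodes t) -> subtree s t ->
  perm_eq (bleaves (graft t (blabel s) u) ++ bleaves s) (bleaves t ++ bleaves u).
Proof. exact: (@graft_perm bleaves (fun => [::])). Qed.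

Lemma blabel_graft t a u :
  blabel (graft t a u) = if blabel t == a then blabel u else blabel t.
Proof. by case: t => [w|w l r] /=; case: eqP. Qed.

Definition relabel_children a b (tr : nat * nat * nat) : nat * nat * nat :=
  (tr.1.1, if tr.1.2 == a then b else tr.1.2, if tr.2 == a then b else tr.2).

Lemma graft_internal t a u tr : tr \in binternal (graft t a u) ->
  tr \in binternal u \/ exists2 tr', tr' \in binternal t & tr = relabel_children a (blabel u) tr'.
Proof.
elim: t => [w|w l IHl r IHr] /=; first by case: (w == a) => //= H; left.
case Ew: (w == a); first by left.
rewrite /= inE mem_cat => /orP[/eqP->|/orP[/IHl|/IHr]].
- right; exists (w, blabel l, blabel r); first by rewrite inE eqxx.
  by rewrite /relabel_children !blabel_graft.
- by case=> [|[tr' H1 ->]]; [left | right; exists tr'; rewrite // inE mem_cat H1 orbT].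
- by case=> [|[tr' H1 ->]]; [left | right; exists tr'; rewrite // inE mem_cat H1 !orbT].
Qed.

Lemma graft_bext t g a s u : bext t g ->
  (forall t0, subtree t0 t -> blabel t0 = a -> t0 = s) ->
  (forall g', subtree g' g -> bext s g' -> bext u g') ->
  bext (graft t a u) g.
Proof.
move=> B; elim: B (B) => [v|v l' r' l r Bl IHl Br IHr|v l' r' g' Bl IH|v l' r' g' Br IH] B Hs Hu /=;
  (case: eqP => [/(Hs _ (subtree_refl _)) Es|_];
   [by apply: Hu; [apply: subtree_refl | rewrite -Es] |]).
- exact: bext_leaf.
- apply: bext_node.
  + by apply: IHl => // [t0 /subtree_l /Hs | g0 /subtree_l /Hu].
  + by apply: IHr => // [t0 /subtree_r /Hs | g0 /subtree_r /Hu].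
- by apply: bext_pruneR; apply: IH => // t0 /subtree_l /Hs.
- by apply: bext_pruneL; apply: IH => // t0 /subtree_r /Hs.
Qed.

(** * Ancestry in the species tree *)

Definition is_below t x y := exists u, [/\ subtree u t, blabel u = x & y \in bnodes u].

Definition is_child t x y :=
  exists z, (x, y, z) \in binternal t \/ (x, z, y) \in binternal t.

Lemma internal_children t x y z : (x, y, z) \in binternal t -> is_child t x y /\ is_child t x z.
Proof. by move=> H; split; [exists z; left | exists y; right]. Qed.

Lemma below_in t x y : is_below t x y -> y \in bnodes t.
Proof. by case=> u [/subtree_nodes H _ /H]. Qed.

Lemma below_refl t x : x \in bnodes t -> is_below t x x.
Proof. by case/node_subtree => u H E; exists u; rewrite -E blabel_in. Qed.

Lemma below_subtree t u y : uniq (bnodes t) -> subtree u t ->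
  is_below t (blabel u) y -> y \in bnodes u.
Proof. by move=> U H [u' [H' E Hy]]; rewrite -(subtree_label_inj U H' H E). Qed.

Lemma below_trans t x y z : uniq (bnodes t) ->
  is_below t x y -> is_below t y z -> is_below t x z.
Proof.
move=> U [u [Hu Ex Hy]] [w [Hw Ey Hz]].
case: (node_subtree Hy) => w' Hw' Ew'.
have Eww' : w' = w by apply: (subtree_label_inj U (subtree_trans Hw' Hu) Hw); rewrite Ew'.
by exists u; split=> //; apply: (subtree_nodes Hw'); rewrite Eww'.
Qed.

Lemma child_subtree t x y : is_child t x y ->
  exists l r, subtree (BNode x l r) t /\ (blabel l = y \/ blabel r = y).
Proof.
by case=> z [] /internal_subtree [l [r [H El Er]]]; exists l, r; split=> //; [left | right].
Qed.

Lemma child_in t x y : is_child t x y -> x \in bnodes t /\ y \in bnodes t.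
Proof.
case/child_subtree=> l [r [/subtree_nodes H E]]; split; apply: H; rewrite inE ?eqxx //.
by rewrite mem_cat; case: E => <-; rewrite blabel_in ?orbT.
Qed.

Lemma child_below t x y : is_child t x y -> is_below t x y.
Proof.
case/child_subtree=> l [r [H E]]; exists (BNode x l r); split=> //=.
by rewrite inE mem_cat; case: E => <-; rewrite blabel_in ?orbT.
Qed.

Lemma child_not_above t x y : uniq (bnodes t) -> is_child t x y -> ~ is_below t y x.
Proof.
move=> U /child_subtree [l [r [H E]]].
have [Nl Nr _] := uniq_node (subtree_uniq H U).
case: E => <- Hb.
- by move: Nl; rewrite (below_subtree U (subtree_nodeL H) Hb).
- by move: Nr; rewrite (below_subtree U (subtree_nodeR H) Hb).
Qed.

Lemma child_neq t x y : uniq (bnodes t) -> is_child t x y -> x <> y.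
Proof.
move=> U H E; apply: (child_not_above U H); rewrite -E.
by apply: below_refl; case: (child_in H).
Qed.

Lemma children_disjoint t x y z w : uniq (bnodes t) ->
  is_child t x y -> is_child t x z -> y <> z -> is_below t y w -> is_below t z w -> False.
Proof.
move=> U /child_subtree [l [r [H Ey]]] /child_subtree [l' [r' [H' Ez]]] Nyz.
case: (subtree_label_inj U H H' erefl) => El Er; subst l' r'.
have [_ _ D] := uniq_node (subtree_uniq H U).
have inL := below_subtree U (subtree_nodeL H).
have inR := below_subtree U (subtree_nodeR H).
case: Ey Ez Nyz => <- [] <- Nyz Hy Hz; try by case: (Nyz erefl).
- exact: D w (inL _ Hy) (inR _ Hz).
- exact: D w (inL _ Hz) (inR _ Hy).
Qed.

Lemma child_or_self_strictly_below t p x tau m : uniq (bnodes t) ->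
  is_child t x tau -> is_below t tau m ->
  (x = p \/ is_child t p x) -> (m = p \/ is_child t p m) -> x = p /\ m <> p.
Proof.
move=> U Ct Hm Gx Gm; have Hxm := below_trans U (child_below Ct) Hm.
case: Gm => [Emp|Cpm].
  exfalso; case: Gx => [Exp|Cpx].
    by apply: (child_not_above U Ct); rewrite Exp -Emp.
  by apply: (child_not_above U Cpx); rewrite -Emp.
case: Gx => [Exp|Cpx]; first by split=> // E; apply: (child_neq U Cpm).
exfalso; case: (m =P x) => [Emx|Nmx].
  by apply: (child_not_above U Ct); rewrite -Emx.
by apply: (children_disjoint U Cpx Cpm (nesym Nmx) Hxm); apply/below_refl/(below_in Hm).
Qed.

(** * Duplications, losses and cost *)

Definition unmatched (d : nat -> option nat) (D : seq nat) y : bool :=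
  ~~ has (fun x => d x == Some y) D.

Lemma cost_unmatched G G' rho d :
  cost G G' rho d = size (Delta G' rho) + count (unmatched d (Delta G' rho)) (Lambda G G').
Proof.
rewrite /cost -addnA addnC; congr (_ + _).
  rewrite /Delta' !size_filter -(count_predC (fun x => d x != None)) addnC.
  by congr (_ + _); apply: eq_in_count => x Hx /=; rewrite mem_filter Hx andbT.
rewrite size_filter; apply: eq_in_count => y Hy /=; rewrite /Lambda' mem_filter Hy andbT.
congr (~~ _); apply/hasP/hasP => [[x]|[x Hx /eqP Ex]].
  by rewrite /Delta' mem_filter => /andP[_ Hx] Ex; exists x.
by exists x; rewrite ?Ex // /Delta' mem_filter Hx Ex.
Qed.

Lemma count_split (T : Type) (P Q : pred T) (s : seq T) :
  count P s = count (fun e => P e && Q e) s + count (fun e => P e && ~~ Q e) s.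
Proof. by elim: s => //= a s ->; case: (P a); case: (Q a) => /=; lia. Qed.

Lemma count_uniq_sub (s1 s2 : seq nat) (P : pred nat) : uniq s1 -> uniq s2 ->
  {subset s2 <= s1} -> count P s1 = count P s2 + count (fun x => P x && (x \notin s2)) s1.
Proof.
move=> U1 U2 S; rewrite (count_split P (mem s2)); congr (_ + _).
have Hp : perm_eq [seq x <- s1 | x \in s2] s2.
  apply: uniq_perm; [exact: filter_uniq | exact: U2 |] => x; rewrite mem_filter.
  by apply/andP/idP => [[]//|H]; split=> //; apply: S.
by rewrite -(permP Hp) count_filter; apply: eq_count.
Qed.

Definition partner_in (d : nat -> option nat) (L : seq nat) x : bool :=
  if d x is Some y then y \in L else false.

Definition restrict_partner (d : nat -> option nat) (L : seq nat) x : option nat :=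
  if partner_in d L x then d x else None.

(** A loss that loses its partner under restriction was matched by a
    duplication that has itself disappeared. *)
Lemma unmatched_restrict_bound (D1 D2 L2 : seq nat) (d : nat -> option nat) : uniq L2 ->
  count (unmatched (restrict_partner d L2) D2) L2 <=
  count (unmatched d D1) L2 + count (fun x => (x \notin D2) && partner_in d L2 x) D1.
Proof.
move=> UL2; rewrite (count_split _ (unmatched d D1)).
apply: leq_add; first by apply: sub_count => y /andP[].
set rematched := [seq odflt 0 (d x) | x <- D1 & (x \notin D2) && partner_in d L2 x].
rewrite -size_filter (_ : count _ D1 = size rematched); last by rewrite size_map size_filter.
apply: uniq_leq_size; first exact: filter_uniq.
move=> y; rewrite mem_filter => /andP[/andP[Hu2 /negbNE /hasP[x Hx /eqP Ex]] Hy].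
apply/mapP; exists x; rewrite ?Ex // mem_filter Hx andbT /partner_in Ex Hy andbT.
apply: contra Hu2 => HxD2; apply/hasP; exists x => //.
by rewrite /restrict_partner /partner_in Ex Hy.
Qed.

Lemma restrict_cost_lt (D1 D2 L1 L2 : seq nat) (d : nat -> option nat) :
  uniq D1 -> uniq D2 -> uniq L1 -> uniq L2 -> {subset D2 <= D1} -> {subset L2 <= L1} ->
  (exists2 w, w \in D1 & w \notin D2 /\ ~~ partner_in d L2 w) \/
  (exists2 l, l \in L1 & l \notin L2 /\ unmatched d D1 l) ->
  size D2 + count (unmatched (restrict_partner d L2) D2) L2 <
  size D1 + count (unmatched d D1) L1.
Proof.
move=> UD1 UD2 UL1 UL2 SD SL W.
have := unmatched_restrict_bound D1 D2 d UL2.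
have := count_uniq_sub (unmatched d D1) UL1 UL2 SL.
have := count_uniq_sub predT UD1 UD2 SD; rewrite !count_predT.
rewrite (count_split (fun x => x \notin D2) (partner_in d L2)).
have : 0 < count (fun x => (x \notin D2) && ~~ partner_in d L2 x) D1 +
           count (fun y => unmatched d D1 y && (y \notin L2)) L1.
  case: W => [[w Hw [HwD2 Hp]]|[l Hl [HlL2 Hu]]]; [apply: ltn_addr | apply: ltn_addl].
    by rewrite -has_count; apply/hasP; exists w; rewrite ?HwD2.
  by rewrite -has_count; apply/hasP; exists l; rewrite ?Hu.
lia.
Qed.

Lemma perm_cat_notin (s r s' : seq nat) x :
  perm_eq (s ++ r) s' -> uniq s' -> x \in r -> x \notin s.
Proof.
move=> /perm_uniq <-; rewrite cat_uniq => /and3P[_ /hasPn D _] /D.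
by apply: contra => Hx.
Qed.

Definition rho3 (rho : nat -> nat) (tr : nat * nat * nat) := (rho tr.1.1, rho tr.1.2, rho tr.2).

Lemma rho3_relabel rho a b tr :
  rho b = rho a -> rho3 rho (relabel_children a b tr) = rho3 rho tr.
Proof. by move=> E; rewrite /rho3 /=; congr (_, _, _); case: eqP => // ->. Qed.

Lemma DeltaP (G' : rtree) rho x : reflect
  (exists2 tr, tr \in rinternal G' & [/\ tr.1.1 = x, rho tr.1.2 = rho x & rho tr.2 = rho x])
  (x \in Delta G' rho).
Proof.
apply: (iffP mapP) => [[tr]|[tr Htr [<- E2 E3]]].
  by rewrite mem_filter => /andP[/andP[/eqP E2 /eqP E3] Htr] ->; exists tr.
by exists tr; rewrite // mem_filter Htr E2 E3 !eqxx.
Qed.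

Lemma Delta_nodes (G' : rtree) rho x : x \in Delta G' rho -> x \in bnodes (rchild G').
Proof. by case/DeltaP=> tr /internal_head_in + [<- _ _]. Qed.

Lemma internal_heads_subseq t : subseq [seq tr.1.1 | tr <- binternal t] (bnodes t).
Proof. by elim: t => [//|v l IHl r IHr]; rewrite /= eqxx map_cat cat_subseq. Qed.

Lemma Delta_uniq (G' : rtree) rho : uniq (bnodes (rchild G')) -> uniq (Delta G' rho).
Proof.
move=> U; apply: subseq_uniq U; apply: subseq_trans (internal_heads_subseq _).
exact/map_subseq/filter_subseq.
Qed.

Lemma Lambda_uniq G G' : uniq (bnodes (rchild G')) -> uniq (Lambda G G').
Proof. by move/bleaves_uniq; apply: filter_uniq. Qed.

Lemma Delta_head z t rho x a b : uniq (bnodes t) -> x \in Delta (RTree z t) rho ->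
  (x, a, b) \in binternal t -> rho a = rho x /\ rho b = rho x.
Proof.
move=> U /DeltaP [[[x' a'] b'] H [/= Ex Ea Eb]] Hx; subst x'.
by case: (internal_label_inj U H Hx) => <- <-.
Qed.

Lemma Delta_graft z t a u rho x : rho (blabel u) = rho a -> x \notin bnodes u ->
  x \in Delta (RTree z (graft t a u)) rho -> x \in Delta (RTree z t) rho.
Proof.
move=> Eu Nx /DeltaP [tr /graft_internal [Hu|[tr' Ht ->]] [Ex E2 E3]].
  by move: Nx; rewrite -Ex (internal_head_in Hu).
apply/DeltaP; exists tr' => //; move: (rho3_relabel tr' Eu) Ex E2 E3 => [].
by rewrite /= => <- <- -> ->.
Qed.

Lemma consistentP S rho G' x a b : consistent S rho G' -> (x, a, b) \in rinternal G' ->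
  (rho a = rho x /\ rho b = rho x) \/ (rho x, rho a, rho b) \in rinternal S.
Proof.
by case=> _ C /C [[-> ->]|[sl [sr [H [-> ->]]]]]; [left | right].
Qed.

Lemma consistent_children S rho G' x a b : consistent S rho G' -> (x, a, b) \in rinternal G' ->
  (rho a = rho x \/ is_child (rchild S) (rho x) (rho a)) /\
  (rho b = rho x \/ is_child (rchild S) (rho x) (rho b)).
Proof.
move=> C /(consistentP C) [[-> ->]|/internal_children [? ?]]; first by split; left.
by split; right.
Qed.

(** * Locating a pruning *)

Lemma bext_root_kept x a b g : uniq (bnodes (BNode x a b)) -> bext a g \/ bext b g ->
  blabel g <> x.
Proof.
case/uniq_node=> Na Nb _ [] /bext_nodes /(_ _ (blabel_in g)) + E; rewrite E.
  by rewrite (negbTE Na).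
by rewrite (negbTE Nb).
Qed.

Definition trace_within (X : seq nat) t (Y : seq nat) :=
  forall w, w \in X -> w \in bnodes t -> w \in Y.

Lemma trace_within_nodeL X v l r l' r' Y : uniq (bnodes (BNode v l' r')) ->
  {subset bnodes r <= bnodes r'} -> {subset X <= bnodes l'} ->
  trace_within X l Y -> trace_within X (BNode v l r) Y.
Proof.
move=> /uniq_node [Nl _ D] Sr SX C w Hw; rewrite inE mem_cat => /orP[/eqP E|/orP[|/Sr]].
- by move: (SX _ Hw); rewrite E (negbTE Nl).
- exact: C.
- by move=> Hr; case: (D w (SX _ Hw) Hr).
Qed.

Lemma trace_within_nodeR X v l r l' r' Y : uniq (bnodes (BNode v l' r')) ->
  {subset bnodes l <= bnodes l'} -> {subset X <= bnodes r'} ->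
  trace_within X r Y -> trace_within X (BNode v l r) Y.
Proof.
move=> /uniq_node [_ Nr D] Sl SX C w Hw; rewrite inE mem_cat => /orP[/eqP E|/orP[/Sl|]].
- by move: (SX _ Hw); rewrite E (negbTE Nr).
- by move=> Hl; case: (D w Hl (SX _ Hw)).
- exact: C.
Qed.

Lemma rtree_eq (A B : rtree) : rroot A = rroot B -> rchild A = rchild B -> A = B.
Proof. by case: A B => [? ?] [? ?] /= -> ->. Qed.

Lemma btree_eq_dec (t1 t2 : btree) : {t1 = t2} + {t1 <> t2}.
Proof. decide equality; exact: PeanoNat.Nat.eq_dec. Qed.

Definition root_pruned t' t'' := exists x a b, t' = BNode x a b /\
  (bext a t'' /\ trace_within (bnodes b) t'' [::] \/
   bext b t'' /\ trace_within (bnodes a) t'' [::]).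

Definition child_replaced t' t'' := exists p l' r' l r,
  [/\ subtree (BNode p l' r') t', subtree (BNode p l r) t'', bext l' l, bext r' r &
   [/\ trace_within (bnodes l') t'' (bnodes l), trace_within (bnodes r') t'' (bnodes r)
     & (blabel l' != blabel l) || (blabel r' != blabel r)]].

Lemma child_replaced_nodeL v l' r' l r : uniq (bnodes (BNode v l' r')) -> bext r' r ->
  child_replaced l' l -> child_replaced (BNode v l' r') (BNode v l r).
Proof.
move=> U Br [p [l0' [r0' [l0 [r0 [I1 I2 B1 B2 [C1 C2 N]]]]]]].
have S w : w \in bnodes l0' ++ bnodes r0' -> w \in bnodes l'.
  by move=> Hw; apply: (subtree_nodes I1); rewrite inE Hw orbT.
exists p, l0', r0', l0, r0; split; try by [apply: subtree_l | ].
split=> //; apply: (trace_within_nodeL U (bext_nodes Br)) => // w Hw;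
  by apply: S; rewrite mem_cat Hw ?orbT.
Qed.

Lemma child_replaced_nodeR v l' r' l r : uniq (bnodes (BNode v l' r')) -> bext l' l ->
  child_replaced r' r -> child_replaced (BNode v l' r') (BNode v l r).
Proof.
move=> U Bl [p [l0' [r0' [l0 [r0 [I1 I2 B1 B2 [C1 C2 N]]]]]]].
have S w : w \in bnodes l0' ++ bnodes r0' -> w \in bnodes r'.
  by move=> Hw; apply: (subtree_nodes I1); rewrite inE Hw orbT.
exists p, l0', r0', l0, r0; split; try by [apply: subtree_r | ].
split=> //; apply: (trace_within_nodeR U (bext_nodes Bl)) => // w Hw;
  by apply: S; rewrite mem_cat Hw ?orbT.
Qed.

Lemma root_pruned_label t' t'' : uniq (bnodes t') -> root_pruned t' t'' -> blabel t'' <> blabel t'.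
Proof.
move=> U [x [a [b [Et K]]]] E; rewrite Et in U E; apply: (bext_root_kept U _ E).
by case: K => [[? _]|[? _]]; [left | right].
Qed.

Lemma bext_first_difference t' t'' : bext t' t'' -> uniq (bnodes t') -> t' <> t'' ->
  root_pruned t' t'' \/ child_replaced t' t''.
Proof.
elim=> [v|v l' r' l r Bl IHl Br IHr|v l' r' g Bl _|v l' r' g Br _] U Ne; first by case: Ne.
- have [Ul Ur] : uniq (bnodes l') /\ uniq (bnodes r').
    by move: U => /= /andP[_]; rewrite cat_uniq => /and3P[].
  right; case: (boolP ((blabel l' != blabel l) || (blabel r' != blabel r))) => Hne.
    exists v, l', r', l, r; split=> //; try exact: subtree_refl.
    split=> //; [apply: (trace_within_nodeL U (bext_nodes Br)) |
                 apply: (trace_within_nodeR U (bext_nodes Bl))] => //; exact: bext_nodes.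
  move: Hne; rewrite negb_or !negbK => /andP[/eqP El /eqP Er].
  case: (btree_eq_dec l' l) => [El'|Nl].
    case: (btree_eq_dec r' r) => [Er'|Nr]; first by case: Ne; rewrite El' Er'.
    case: (IHr Ur Nr) => [/(root_pruned_label Ur)|]; first by rewrite Er.
    exact: child_replaced_nodeR.
  case: (IHl Ul Nl) => [/(root_pruned_label Ul)|]; first by rewrite El.
  exact: child_replaced_nodeL.
- left; exists v, l', r'; split=> //; left; split=> // w Hw /(bext_nodes Bl).
  by have [_ _ D] := uniq_node U; move/D/(_ Hw).
- left; exists v, l', r'; split=> //; right; split=> // w Hw /(bext_nodes Br).
  by have [_ _ D] := uniq_node U; move=> H; case: (D w Hw H).
Qed.

Lemma pruned_node_shape q' q t'' : bext q' q -> uniq (bnodes q') -> blabel q' <> blabel q ->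
  trace_within (bnodes q') t'' (bnodes q) ->
  exists y c d, q' = BNode y c d /\
    (bext c q /\ trace_within (bnodes d) t'' [::] \/ bext d q /\ trace_within (bnodes c) t'' [::]).
Proof.
case=> [v|v l' r' l r _ _|v l' r' g B|v l' r' g B] U Ne C; try by case: Ne.
all: have [_ _ D] := uniq_node U; exists v, l', r'; split=> //.
- left; split=> // w Hw Ht.
  have Hw' : w \in bnodes (BNode v l' r') by rewrite /= inE mem_cat Hw !orbT.
  by case: (D w (bext_nodes B (C w Hw' Ht)) Hw).
- right; split=> // w Hw Ht.
  have Hw' : w \in bnodes (BNode v l' r') by rewrite /= inE mem_cat Hw !orbT.
  by case: (D w Hw (bext_nodes B (C w Hw' Ht))).
Qed.

(** * Optimal reconciliations *)

Section Optimal.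

Variables (G S : rtree) (phi : nat -> nat) (G' : rtree) (rho : nat -> nat)
  (delta : nat -> option nat).
Hypothesis setting_GS : setting G S phi.
Hypothesis optimal_G' : optimal G G' S phi rho delta.

Local Notation T := (rchild G').
Local Notation TS := (rchild S).

Lemma reconciliation_G' : reconciliation G G' S phi rho delta.
Proof. by case: optimal_G'. Qed.

Lemma wf_G' : wf G'.
Proof. by case: reconciliation_G' => [[]]. Qed.

Lemma uniq_T : uniq (bnodes T).
Proof. by case/andP: wf_G'. Qed.

Lemma uniq_TS : uniq (bnodes TS).
Proof. by case: setting_GS => _ /andP[]. Qed.

Lemma bext_TG : bext T (rchild G).
Proof. by case: reconciliation_G' => [[]]. Qed.

Lemma consistent_G' : consistent S rho G'.
Proof. by case: reconciliation_G'. Qed.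

Lemma partner_spec x l : x \in Delta G' rho -> delta x = Some l ->
  l \in Lambda G G' /\ rho x = rho l.
Proof. by case: reconciliation_G' => _ _ _ _ [D _]; apply: D. Qed.

Definition with_child t := RTree (rroot G') t.

Lemma notin_Delta t x : x \notin bnodes t -> x \notin Delta (with_child t) rho.
Proof. exact: contra (@Delta_nodes (with_child t) rho x). Qed.

Definition lost U := forall v, v \in bnodes U -> v \notin rnodes G.

Definition realized tr :=
  exists2 tr', tr' \in binternal T & tr'.1.1 = tr.1.1 /\ rho3 rho tr' = rho3 rho tr.

Definition speciation tr := rho3 rho tr \in rinternal S.

Definition admissible_triple tr := realized tr \/ speciation tr.

(** Candidates for replacing [T] below the root of [G'] while keeping [rho]. *)
Definition admissible t :=
  [/\ uniq (rroot G' :: bnodes t), {subset bnodes t <= bnodes T},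
      {subset bleaves t <= bleaves T}, bext t (rchild G) &
      forall tr, tr \in binternal t -> admissible_triple tr].

Lemma admissible_Delta t : admissible t ->
  {subset Delta (with_child t) rho <= Delta G' rho}.
Proof.
case=> _ _ _ _ Tr x /DeltaP [tr Htr [Ex E2 E3]]; apply/DeltaP.
case: (Tr _ Htr) => [[tr' Htr' [E1' [E1 F2 F3]]]|Hs].
  by exists tr' => //; split; [rewrite E1' | rewrite F2 | rewrite F3].
have := internal_labels_distinct uniq_TS Hs; rewrite /= Ex E2 => -[] //.
Qed.

Lemma admissible_reconciliation t : admissible t ->
  reconciliation G (with_child t) S phi rho (restrict_partner delta (Lambda G (with_child t))).
Proof.
move=> At; have SD := admissible_Delta At; case: At => Ut Sn _ Bt Tr.
case: reconciliation_G' => [[_ rootG' _] Rin [Croot Ctr] Phi [Dl Dinj]].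
split=> //.
- move=> x; rewrite inE => /orP[/eqP->|Hx]; apply: Rin; first by rewrite inE eqxx.
  by rewrite inE Sn ?orbT.
- split=> // x xl xr /Tr [[[[x' xl'] xr'] Htr' [/= Ex [_ <- <-]]]|Hs].
    by move: Htr'; rewrite Ex; apply: Ctr.
  by right; exists (rho xl), (rho xr).
- split=> [x y /SD Hx|x1 x2 /SD H1 /SD H2]; rewrite /restrict_partner /partner_in.
    by case E: (delta x) => [z|] //; case: ifP => // Hz [<-]; rewrite (proj2 (Dl _ _ Hx E)).
  case E1: (delta x1) => [z1|] //; case: ifP => // Hz1 _.
  case E2: (delta x2) => [z2|] //; case: ifP => // Hz2 [Ez]; subst z2.
  by apply: Dinj; rewrite ?E1 ?E2.
Qed.

Lemma admissible_not_cheaper t : admissible t ->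
  (exists2 w, w \in Delta G' rho &
     w \notin Delta (with_child t) rho /\ ~~ partner_in delta (Lambda G (with_child t)) w) \/
  (exists2 l, l \in Lambda G G' &
     l \notin Lambda G (with_child t) /\ unmatched delta (Delta G' rho) l) ->
  False.
Proof.
move=> At W; have := proj2 optimal_G' _ _ _ (admissible_reconciliation At).
rewrite !cost_unmatched leqNgt => /negP; apply.
have [/andP[_ Ut] _ Sl _ _] := At.
apply: restrict_cost_lt W; rewrite ?Delta_uniq ?Lambda_uniq ?uniq_T //.
  exact: admissible_Delta.
by move=> y; rewrite !mem_filter => /andP[-> /Sl].
Qed.

Lemma no_freed_duplication t w : admissible t ->
  w \in Delta G' rho -> w \notin Delta (with_child t) rho ->
  (forall l, delta w = Some l -> l \notin bleaves t) -> False.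
Proof.
move=> At Hw Nw Hl; apply: (admissible_not_cheaper At); left; exists w => //.
split=> //; rewrite /partner_in; case E: (delta w) => [l|] //.
by rewrite mem_filter negb_and (Hl _ E) orbT.
Qed.

Lemma no_dropped_loss t l : admissible t ->
  l \in Lambda G G' -> l \notin bleaves t -> unmatched delta (Delta G' rho) l -> False.
Proof.
move=> At Hl Nl Hu; apply: (admissible_not_cheaper At); right; exists l => //.
by rewrite mem_filter negb_and Nl orbT.
Qed.

(** Removing a duplication pays off as soon as its partner loss, if it survives,
    can be removed as well. *)
Lemma duplication_removal x t1 :
  x \in Delta G' rho -> admissible t1 -> x \notin Delta (with_child t1) rho ->
  (forall l, delta x = Some l -> l \in bleaves t1 ->
     exists2 t2, admissible t2 & x \notin Delta (with_child t2) rho /\ l \notin bleaves t2) ->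
  False.
Proof.
move=> Hx At1 Nx1 Ext; case E: (delta x) => [l|]; last first.
  by apply: (no_freed_duplication At1 Hx Nx1) => l; rewrite E.
case: (boolP (l \in bleaves t1)) => [/(Ext _ E) [t2 At2 [Nx2 Nl2]]|Nl1].
  by apply: (no_freed_duplication At2 Hx Nx2) => l'; rewrite E => -[<-].
by apply: (no_freed_duplication At1 Hx Nx1) => l'; rewrite E => -[<-].
Qed.

Lemma admissible_perm t r r' :
  perm_eq (bnodes t ++ r) (bnodes T) -> perm_eq (bleaves t ++ r') (bleaves T) ->
  bext t (rchild G) -> (forall tr, tr \in binternal t -> admissible_triple tr) ->
  admissible t.
Proof.
move=> Pn Pl Bt Tr; have Sn : {subset bnodes t <= bnodes T}.
  by move=> y Hy; rewrite -(perm_mem Pn) mem_cat Hy.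
split=> //; last by move=> y Hy; rewrite -(perm_mem Pl) mem_cat Hy.
have /andP[Nroot _] := wf_G'; rewrite /= (contra (Sn _) Nroot).
by have := perm_uniq Pn; rewrite uniq_T cat_uniq => /andP[].
Qed.

Lemma subtree_triple_admissible u tr : subtree u T -> tr \in binternal u -> admissible_triple tr.
Proof. by move=> Hu Htr; left; exists tr => //; apply: (subtree_internal Hu). Qed.

Lemma admissible_triple_relabel a b tr :
  rho b = rho a -> admissible_triple tr -> admissible_triple (relabel_children a b tr).
Proof.
move=> E [[tr' Htr' [E1 E2]]|Hs]; [left | right]; last by rewrite /speciation rho3_relabel.
by exists tr' => //; rewrite rho3_relabel.
Qed.

Lemma graft_admissible_triples t a u :
  (forall tr, tr \in binternal t -> admissible_triple tr) ->
  (forall tr, tr \in binternal u -> admissible_triple tr) -> rho (blabel u) = rho a ->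
  forall tr, tr \in binternal (graft t a u) -> admissible_triple tr.
Proof.
move=> Tt Tu E tr /graft_internal [/Tu //|[tr' /Tt H ->]].
exact: admissible_triple_relabel.
Qed.

Lemma bext_lost U g : bext U g -> subtree g (rchild G) -> lost U -> False.
Proof.
move=> B /subtree_nodes H /(_ _ (bext_nodes B (blabel_in g))).
by rewrite inE H ?blabel_in ?orbT.
Qed.

Lemma bext_drop_lostR x a b g : bext (BNode x a b) g -> subtree g (rchild G) -> lost b -> bext a g.
Proof.
move=> B Hg Fb; case/bext_node_inv: B => [[l [r [E _ Br]]]|//|Bb]; exfalso.
  by rewrite E in Hg; apply: (bext_lost Br (subtree_nodeR Hg) Fb).
exact: bext_lost Bb Hg Fb.
Qed.

Lemma bext_drop_lostL x a b g : bext (BNode x a b) g -> subtree g (rchild G) -> lost a -> bext b g.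
Proof.
move=> B Hg Fa; case/bext_node_inv: B => [[l [r [E Bl _]]]|Ba|//]; exfalso.
  by rewrite E in Hg; apply: (bext_lost Bl (subtree_nodeL Hg) Fa).
exact: bext_lost Ba Hg Fa.
Qed.

Lemma consistent_below a : subtree a T -> rho (blabel a) \in bnodes TS ->
  forall v, v \in bnodes a -> is_below TS (rho (blabel a)) (rho v).
Proof.
elim: a => [w|w l IHl r IHr] Ha Hin v /=; first by rewrite inE => /eqP->; apply: below_refl.
have [Bl Br] : is_below TS (rho w) (rho (blabel l)) /\ is_below TS (rho w) (rho (blabel r)).
  case: (consistentP consistent_G' (subtree_internal_head Ha)) => [[-> ->]|/internal_children].
    by split; apply: below_refl.
  by case=> /child_below ? /child_below.
rewrite inE mem_cat => /orP[/eqP->|/orP[Hv|Hv]]; first exact: below_refl.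
- by apply: (below_trans uniq_TS Bl); apply: IHl (subtree_nodeL Ha) (below_in Bl) _ Hv.
- by apply: (below_trans uniq_TS Br); apply: IHr (subtree_nodeR Ha) (below_in Br) _ Hv.
Qed.

Lemma graft_subtree_admissible s u r rl :
  subtree s T -> perm_eq (bnodes u ++ r) (bnodes s) -> perm_eq (bleaves u ++ rl) (bleaves s) ->
  (forall g, subtree g (rchild G) -> bext s g -> bext u g) ->
  (forall tr, tr \in binternal u -> admissible_triple tr) -> rho (blabel u) = rho (blabel s) ->
  [/\ admissible (graft T (blabel s) u), perm_eq (bnodes (graft T (blabel s) u) ++ r) (bnodes T)
    & perm_eq (bleaves (graft T (blabel s) u) ++ rl) (bleaves T)].
Proof.
move=> Hs /permP Pu /permP Pul Bu Tu Eu.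
have /permP Pn := graft_nodes u uniq_T Hs; have /permP Pl := graft_leaves u uniq_T Hs.
have Pn1 : perm_eq (bnodes (graft T (blabel s) u) ++ r) (bnodes T).
  by apply/permP => P; move: (Pn P) (Pu P); rewrite !count_cat; lia.
have Pl1 : perm_eq (bleaves (graft T (blabel s) u) ++ rl) (bleaves T).
  by apply/permP => P; move: (Pl P) (Pul P); rewrite !count_cat; lia.
split=> //; apply: (admissible_perm Pn1 Pl1).
  apply: (graft_bext bext_TG _ Bu) => t0 H0 E0.
  exact: subtree_label_inj uniq_T H0 Hs E0.
apply: (graft_admissible_triples _ Tu Eu) => tr.
exact: subtree_triple_admissible (subtree_refl T).
Qed.

Lemma graft_loss_admissible t l u r r' rl :
  admissible t -> perm_eq (bnodes t ++ r) (bnodes T) -> perm_eq (bleaves t ++ rl) (bleaves T) ->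
  l \in bleaves t -> l \in Lambda G G' ->
  perm_eq (bnodes u ++ r') (l :: r) -> perm_eq (bleaves u) rl ->
  (forall tr, tr \in binternal u -> admissible_triple tr) -> rho (blabel u) = rho l ->
  [/\ admissible (graft t l u), perm_eq (bnodes (graft t l u) ++ r') (bnodes T)
    & l \notin bleaves (graft t l u)].
Proof.
move=> At /permP Pn /permP Pl Hl HlL /permP Pu /permP Pul Tu Eu.
have [/andP[_ Ut] _ _ Bt Tt] := At.
have Hsl : subtree (BLeaf l) t by apply/leaf_subtree.
have /permP Pn2 := graft_nodes u Ut Hsl; have /permP Pl2 := graft_leaves u Ut Hsl.
have Pn3 : perm_eq (bnodes (graft t l u) ++ r') (bnodes T).
  by apply/permP => P; move: (Pn P) (Pn2 P) (Pu P); rewrite !count_cat /=; lia.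
have Pl3 : perm_eq (bleaves (graft t l u) ++ [:: l]) (bleaves T).
  by apply/permP => P; move: (Pl P) (Pl2 P) (Pul P); rewrite !count_cat /=; lia.
split=> //; last by apply: (perm_cat_notin Pl3); rewrite ?bleaves_uniq ?uniq_T ?mem_head.
apply: (admissible_perm Pn3 Pl3); last exact: graft_admissible_triples Tt Tu Eu.
apply: (graft_bext Bt) => [t0 H0 E0|g Hg /bext_leaf_inv Eg].
  exact: subtree_label_inj Ut H0 Hsl E0.
by move: HlL Hg; rewrite mem_filter /rleaves Eg => /andP[/negP NG _] /leaf_subtree.
Qed.

Lemma node_either_perm x U z s : s = BNode x U z \/ s = BNode x z U ->
  perm_eq (bnodes z ++ x :: bnodes U) (bnodes s) /\ perm_eq (bleaves z ++ bleaves U) (bleaves s).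
Proof.
by case=> ->; split; apply/permP => P; rewrite /= !count_cat /= ?count_cat; lia.
Qed.

(** Delete [x] and [U]; if the partner loss of [x] survives, [U] is moved onto it. *)
Lemma duplication_over_lost_subtree s x U z :
  subtree s T -> s = BNode x U z \/ s = BNode x z U -> lost U ->
  rho (blabel U) = rho x -> rho (blabel z) = rho x -> False.
Proof.
move=> Hs Es FU EU Ez.
have Lx : blabel s = x by case: Es => ->.
have [HU Hz] : subtree U T /\ subtree z T.
  by case: Es Hs => -> H; split; [exact: subtree_nodeL H | exact: subtree_nodeR H
                                  | exact: subtree_nodeR H | exact: subtree_nodeL H].
have [Pn Pl] := node_either_perm Es.
have Bz g : subtree g (rchild G) -> bext s g -> bext z g.
  move=> Hg; case: Es => -> Bs.
    exact: bext_drop_lostL Bs Hg FU.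
  exact: bext_drop_lostR Bs Hg FU.
have Ezs : rho (blabel z) = rho (blabel s) by rewrite Lx.
have [At1 Pn1 Pl1] :=
  graft_subtree_admissible Hs Pn Pl Bz (fun tr => subtree_triple_admissible Hz) Ezs.
rewrite Lx in At1 Pn1 Pl1.
have Nx1 := perm_cat_notin Pn1 uniq_T (mem_head _ _).
have Hx : x \in Delta G' rho.
  apply/DeltaP; case: Es Hs => -> /subtree_internal_head H; first by exists (x, blabel U, blabel z).
  by exists (x, blabel z, blabel U).
apply: (duplication_removal Hx At1 (notin_Delta Nx1)) => l El Hl.
have [HlL Erl] := partner_spec Hx El.
have Pn' : perm_eq (bnodes U ++ [:: l; x]) [:: l, x & bnodes U] by rewrite perm_catC.
have [At2 Pn2 Nl2] := graft_loss_admissible At1 Pn1 Pl1 Hl HlL Pn' (perm_refl _)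
  (fun tr => subtree_triple_admissible HU) (etrans EU Erl).
exists (graft (graft T x z) l U) => //; split=> //.
by apply: notin_Delta; apply: (perm_cat_notin Pn2 uniq_T); rewrite !inE eqxx orbT.
Qed.

(** Delete the root and [U]. A leaf of [U] was then either unmatched, or matched by a
    duplication outside [z]: [rho] maps [U] and [z] below distinct children of [rho x]. *)
Lemma speciation_root_over_lost_subtree x U z :
  T = BNode x U z \/ T = BNode x z U -> lost U ->
  is_child TS (rho x) (rho (blabel U)) -> is_child TS (rho x) (rho (blabel z)) ->
  rho (blabel U) <> rho (blabel z) -> False.
Proof.
move=> ET FU CU Cz NUz.
have [Pn Pl] := node_either_perm ET.
have [HU Hz] : subtree U T /\ subtree z T.
  by rewrite /=; case: ET => ->; split; constructor; apply: subtree_refl.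
have Az : admissible z.
  apply: (admissible_perm Pn Pl); last by move=> tr; apply: subtree_triple_admissible Hz.
  by case: ET bext_TG => -> B;
    [apply: bext_drop_lostL B _ FU | apply: bext_drop_lostR B _ FU]; apply: subtree_refl.
have [l Hl] := bleaves_exists U.
have Nlz : l \notin bleaves z := perm_cat_notin Pl (bleaves_uniq uniq_T) Hl.
have HlL : l \in Lambda G G'.
  rewrite mem_filter -(perm_mem Pl) mem_cat Hl orbT andbT.
  by apply: contra (FU _ (bleaves_sub Hl)) => /bleaves_sub HG; rewrite inE HG orbT.
case: (boolP (unmatched delta (Delta G' rho) l)) => [|/negbNE/hasP[y Hy /eqP Ey]].
  exact: no_dropped_loss Az HlL Nlz.
have [_ Ery] := partner_spec Hy Ey.
case: (boolP (y \in bnodes z)) => Hyz.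
  apply: (children_disjoint uniq_TS CU Cz NUz).
    exact: consistent_below HU (child_in CU).2 _ (bleaves_sub Hl).
  by rewrite -Ery; apply: consistent_below Hz (child_in Cz).2 _ Hyz.
by apply: (no_freed_duplication Az Hy (notin_Delta Hyz)) => l'; rewrite Ey => -[<-].
Qed.

(** Replace the subtree at the duplication [p] by the speciation [p -> (a, d)]; if the
    partner loss [l] of [p] survives, it becomes the speciation [l -> (c, b)]. *)
Section ComplementaryLosses.

Variables (p x y : nat) (a b c d : btree).
Hypothesis sub_p : subtree (BNode p (BNode x a b) (BNode y c d)) T.
Hypotheses (lost_b : lost b) (lost_c : lost c).
Hypotheses (rho_x : rho x = rho p) (rho_y : rho y = rho p).
Hypothesis speciation_p : (rho p, rho (blabel a), rho (blabel b)) \in rinternal S.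
Hypotheses (rho_c : rho (blabel c) = rho (blabel a)) (rho_d : rho (blabel d) = rho (blabel b)).

Local Notation s := (BNode p (BNode x a b) (BNode y c d)).
Local Notation t1 := (graft T p (BNode p a d)).

Lemma complementary_bext g : subtree g (rchild G) -> bext s g -> bext (BNode p a d) g.
Proof.
move=> Hg /bext_node_inv [[l [r [Eg Bl Br]]]|Bl|Br].
- rewrite Eg in Hg *; apply: bext_node.
    exact: bext_drop_lostR Bl (subtree_nodeL Hg) lost_b.
  exact: bext_drop_lostL Br (subtree_nodeR Hg) lost_c.
- exact/bext_pruneR/(bext_drop_lostR Bl Hg lost_b).
- exact/bext_pruneL/(bext_drop_lostL Br Hg lost_c).
Qed.

Lemma complementary_first_graft :
  [/\ admissible t1, perm_eq (bnodes t1 ++ [:: x, y & bnodes b ++ bnodes c]) (bnodes T),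
      perm_eq (bleaves t1 ++ bleaves b ++ bleaves c) (bleaves T)
    & p \notin Delta (with_child t1) rho].
Proof.
have Ta : forall tr, tr \in binternal (BNode p a d) -> admissible_triple tr.
  move=> tr; rewrite inE mem_cat => /orP[/eqP->|/orP[]].
  - by right; rewrite /speciation /rho3 /= rho_d.
  - exact/subtree_triple_admissible/(subtree_nodeL (subtree_nodeL sub_p)).
  - exact/subtree_triple_admissible/(subtree_nodeR (subtree_nodeR sub_p)).
have Pn : perm_eq (bnodes (BNode p a d) ++ [:: x, y & bnodes b ++ bnodes c]) (bnodes s).
  by apply/permP => P; rewrite /= !count_cat /= ?count_cat; lia.
have Pl : perm_eq (bleaves (BNode p a d) ++ bleaves b ++ bleaves c) (bleaves s).
  by apply/permP => P; rewrite /= !count_cat; lia.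
have [At1 Pn1 Pl1] := graft_subtree_admissible sub_p Pn Pl complementary_bext Ta erefl.
split=> //; apply/negP => Hp1; case: At1 => /andP[_ Ut1] _ _ _ _.
have [E _] := Delta_head Ut1 Hp1 (subtree_internal_head (graft_subtree_self _ sub_p)).
by have [] := internal_labels_distinct uniq_TS speciation_p; rewrite E.
Qed.

Lemma complementary_losses_absurd : False.
Proof.
have [At1 Pn1 Pl1 Np1] := complementary_first_graft.
have Hp : p \in Delta G' rho.
  by apply/DeltaP; exists (p, x, y); [apply: subtree_internal_head sub_p | split].
apply: (duplication_removal Hp At1 Np1) => l El Hl.
have [HlL Erl] := partner_spec Hp El.
have Tl : forall tr, tr \in binternal (BNode l c b) -> admissible_triple tr.
  move=> tr; rewrite inE mem_cat => /orP[/eqP->|/orP[]].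
  - by right; rewrite /speciation /rho3 /= -Erl rho_c.
  - exact/subtree_triple_admissible/(subtree_nodeL (subtree_nodeR sub_p)).
  - exact/subtree_triple_admissible/(subtree_nodeR (subtree_nodeL sub_p)).
have Pn : perm_eq (bnodes (BNode l c b) ++ [:: x; y]) [:: l, x, y & bnodes b ++ bnodes c].
  by apply/permP => P; rewrite /= !count_cat /= ?count_cat; lia.
have [At2 _ Nl2] :=
  graft_loss_admissible At1 Pn1 Pl1 Hl HlL Pn (permEl (perm_catC _ _)) Tl erefl.
have Np2 : p \notin bnodes (BNode l c b).
  have pt1 : p \in bnodes t1.
    by apply: (subtree_nodes (graft_subtree_self _ sub_p)); rewrite inE eqxx.
  have Ut1 : uniq (bnodes t1) by case: At1 => /andP[].
  rewrite inE mem_cat negb_or; apply/andP; split.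
    apply/eqP => Epl; have := subtree_label_inj Ut1 (graft_subtree_self _ sub_p).
    by move/leaf_subtree: Hl => Hl /(_ _ Hl); rewrite Epl => /(_ erefl).
  apply/negP => Hpcb; suff : p \notin bnodes t1 by rewrite pt1.
  apply: (perm_cat_notin Pn1 uniq_T).
  by rewrite !inE mem_cat; case/orP: Hpcb => ->; rewrite !orbT.
exists (graft t1 l (BNode l c b)) => //; split=> //.
exact: contra (Delta_graft (z := rroot G') erefl Np2) Np1.
Qed.

End ComplementaryLosses.

Section Pruning.

Variable G'' : rtree.
Hypotheses (ext_G''G : extension G'' G) (root_G'' : rroot G'' = rroot G').
Hypothesis consistent_G'' : consistent S rho G''.

Local Notation T'' := (rchild G'').

Lemma pruned_lost d : subtree d T -> trace_within (bnodes d) T'' [::] -> lost d.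
Proof.
case: ext_G''G => _ rootG B Hd C w Hw; rewrite inE negb_or; apply/andP; split.
  have /andP[Nroot _] := wf_G'; apply: contraNneq Nroot => Ew.
  by rewrite -root_G'' rootG -Ew (subtree_nodes Hd).
by apply/negP => /(bext_nodes B) /(C w Hw).
Qed.

Lemma pruned_node_speciation q' q : subtree q' T -> bext q' q -> blabel q' <> blabel q ->
  trace_within (bnodes q') T'' (bnodes q) ->
  exists y c d, [/\ q' = BNode y c d, (rho y, rho (blabel c), rho (blabel d)) \in rinternal S &
    lost d /\ is_below TS (rho (blabel c)) (rho (blabel q)) \/
    lost c /\ is_below TS (rho (blabel d)) (rho (blabel q))].
Proof.
move=> Hq B Ne C.
have [y [c [d [Eq K]]]] := pruned_node_shape B (subtree_uniq Hq uniq_T) Ne C.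
rewrite Eq in Hq; exists y, c, d.
have [Hc Hd] := (subtree_nodeL Hq, subtree_nodeR Hq).
case: (consistentP consistent_G' (subtree_internal_head Hq)) => [[Ec Ed]|HS].
  case: K => [[_ /(pruned_lost Hd) Fd]|[_ /(pruned_lost Hc) Fc]].
    by case: (duplication_over_lost_subtree Hq (or_intror erefl) Fd Ed Ec).
  by case: (duplication_over_lost_subtree Hq (or_introl erefl) Fc Ec Ed).
have [[_ Sc] [_ Sd]] := (child_in (internal_children HS).1, child_in (internal_children HS).2).
split=> //; case: K => [[Bc /(pruned_lost Hd) Fd]|[Bd /(pruned_lost Hc) Fc]]; [left | right].
  by split=> //; apply: consistent_below Hc Sc _ (bext_nodes Bc (blabel_in q)).
by split=> //; apply: consistent_below Hd Sd _ (bext_nodes Bd (blabel_in q)).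
Qed.

Lemma pruned_child_rho p q' q : subtree q' T -> bext q' q -> blabel q' <> blabel q ->
  trace_within (bnodes q') T'' (bnodes q) ->
  rho (blabel q') = rho p \/ is_child TS (rho p) (rho (blabel q')) ->
  rho (blabel q) = rho p \/ is_child TS (rho p) (rho (blabel q)) ->
  rho (blabel q') = rho p /\ rho (blabel q) <> rho p.
Proof.
move=> Hq B Ne C Gq' Gq.
have [y [c [d [Eq HS K]]]] := pruned_node_speciation Hq B Ne C.
rewrite Eq /= in Gq' *; have [Cc Cd] := internal_children HS.
by case: K => [[_ Hb]|[_ Hb]]; apply: child_or_self_strictly_below uniq_TS _ Hb Gq' Gq.
Qed.

Lemma pruned_duplication_absurd p l' r' l r :
  subtree (BNode p l' r') T -> bext l' l -> bext r' r ->
  trace_within (bnodes l') T'' (bnodes l) -> trace_within (bnodes r') T'' (bnodes r) ->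
  rho (blabel l') = rho p -> rho (blabel r') = rho p ->
  (rho p, rho (blabel l), rho (blabel r)) \in rinternal S -> False.
Proof.
move=> Hp Bl Br Cl Cr El' Er' HS.
have [Dl Dr Dlr] := internal_labels_distinct uniq_TS HS.
have [Chl Chr] := internal_children HS.
have Nlr : ~ is_below TS (rho (blabel r)) (rho (blabel l)).
  move=> H; apply: (children_disjoint uniq_TS Chl Chr Dlr _ H).
  exact/below_refl/(child_in Chl).2.
have Nrl : ~ is_below TS (rho (blabel l)) (rho (blabel r)).
  move=> H; apply: (children_disjoint uniq_TS Chl Chr Dlr H).
  exact/below_refl/(child_in Chr).2.
have Ne q' q : rho (blabel q') = rho p -> rho (blabel q) <> rho p -> blabel q' <> blabel q.
  by move=> E1 E2 E; apply: E2; rewrite -E.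
have [x [a [b [El HSx K1]]]] :=
  pruned_node_speciation (subtree_nodeL Hp) Bl (Ne _ _ El' (nesym Dl)) Cl.
have [y [c [d [Er HSy K2]]]] :=
  pruned_node_speciation (subtree_nodeR Hp) Br (Ne _ _ Er' (nesym Dr)) Cr.
rewrite El /= in El'; rewrite Er /= in Er'; rewrite El' in HSx; rewrite Er' in HSy.
have [Ea Eb] := internal_label_inj uniq_TS HSx HS.
have [Ec Ed] := internal_label_inj uniq_TS HSy HS.
have Fb : lost b by case: K1 => [[]//|[_]]; rewrite Eb => /Nlr.
have Fc : lost c by case: K2 => [[_]|[]//]; rewrite Ec => /Nrl.
rewrite El Er in Hp.
by apply: (complementary_losses_absurd Hp Fb Fc El' Er'); rewrite ?Ea ?Eb ?Ec ?Ed.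
Qed.

Lemma pruned_root_absurd : root_pruned T T'' -> False.
Proof.
case=> x [a [b [ET K]]]; have HT : subtree (BNode x a b) T by rewrite -ET; apply: subtree_refl.
have [Ha Hb] := (subtree_nodeL HT, subtree_nodeR HT).
have ET' : T = BNode x a b \/ T = BNode x b a by left.
have ET'' : T = BNode x b a \/ T = BNode x a b by right.
case: (consistentP consistent_G' (subtree_internal_head HT)) => [[Ea Eb]|HS].
  case: K => [[_ /(pruned_lost Hb) Fb]|[_ /(pruned_lost Ha) Fa]].
    exact: (duplication_over_lost_subtree HT (or_intror erefl) Fb Eb Ea).
  exact: (duplication_over_lost_subtree HT (or_introl erefl) Fa Ea Eb).
have [Ca Cb] := internal_children HS; have [_ _ Dab] := internal_labels_distinct uniq_TS HS.
case: K => [[_ /(pruned_lost Hb) Fb]|[_ /(pruned_lost Ha) Fa]].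
  exact: (speciation_root_over_lost_subtree ET'' Fb Cb Ca (nesym Dab)).
exact: (speciation_root_over_lost_subtree ET' Fa Ca Cb Dab).
Qed.

Lemma pruned_internal_absurd : child_replaced T T'' -> False.
Proof.
case=> p [l' [r' [l [r [H' H'' Bl Br [Cl Cr N]]]]]].
have Hin' := subtree_internal_head H'; have Hin'' := subtree_internal_head H''.
have [Gl' Gr'] := consistent_children consistent_G' Hin'.
have [Gl Gr] := consistent_children consistent_G'' Hin''.
have [E' Nq] : (rho (blabel l') = rho p \/ rho (blabel r') = rho p) /\
               (rho (blabel l) <> rho p \/ rho (blabel r) <> rho p).
  case/orP: N => /eqP Ne.
    by have [] := pruned_child_rho (subtree_nodeL H') Bl Ne Cl Gl' Gl; split; left.
  by have [] := pruned_child_rho (subtree_nodeR H') Br Ne Cr Gr' Gr; split; right.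
have [El' Er'] : rho (blabel l') = rho p /\ rho (blabel r') = rho p.
  case: (consistentP consistent_G' Hin') => // HS.
  by have [D1 D2 _] := internal_labels_distinct uniq_TS HS; case: E' => /esym.
apply: (pruned_duplication_absurd H' Bl Br Cl Cr El' Er').
by case: (consistentP consistent_G'' Hin'') => // -[? ?]; case: Nq.
Qed.

End Pruning.

Lemma optimal_minimal :
  ~ exists G'', [/\ extension G' G'', G' <> G'', extension G'' G & consistent S rho G''].
Proof.
case=> G'' [[_ Er B] Neq E2 Cons2].
have Ne : T <> rchild G'' by move=> E; apply: Neq; apply: rtree_eq.
case: (bext_first_difference B uniq_T Ne).
  exact: pruned_root_absurd E2 (esym Er).
exact: pruned_internal_absurd E2 (esym Er) Cons2.
Qed.

End Optimal.

Lemma optimal_self_completion G S phi G' rho delta : optimal G G' S phi rho delta ->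
  completion G S phi G' rho delta G' rho delta.
Proof.
case=> R Opt; have [[wfG' _ _] _ _ _ _] := R; split.
  by split=> //; split=> //; apply: bext_refl.
by move=> G3 rho3 delta3 [_ R3 _ _ _]; apply: Opt R3.
Qed.

Theorem lemma15 (G S : rtree) (phi : nat -> nat)
    (G' : rtree) (rho : nat -> nat) (delta : nat -> option nat) :
  setting G S phi ->
  optimal G G' S phi rho delta ->
  exists (G1 : rtree) (rho1 : nat -> nat) (delta1 : nat -> option nat),
    minimal G G1 S phi rho1 delta1 /\
    completion G S phi G1 rho1 delta1 G' rho delta.
Proof.
move=> HS HO; exists G', rho, delta; split; last exact: optimal_self_completion.
by split; [case: HO | apply: optimal_minimal HS HO].
Qed.
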